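(* Let $\varphi$ be a primitive morphism on a finite alphabet $A$, let $\mathcal{L}_\varphi$ be the language generated by $\varphi$, and let ${\rm S}:\mathcal{L}_\varphi\to\mathbb{Z}\times\mathbb{Z}$ be a homomorphism. If the drift $\Delta_\varphi({\rm S})=\sum_{a\in A}\mu_\varphi(a){\rm S}(a)$ is not $(0,0)$, then $(\mathbb{Z}\times\mathbb{Z})\setminus{\rm S}(\mathcal{L}_\varphi)$ is infinite.
   Context: A morphism $\varphi:A^*\to A^*$ is primitive if there is $k\ge1$ such that for all letters $a,b\in A$ the letter $b$ occurs in $\varphi^k(a)$. The language $\mathcal{L}_\varphi$ generated by $\varphi$ is the set of all nonempty finite words occurring as factors of $\varphi^n(a)$ for some $n\ge0$ and some $a\in A$. For a primitive morphism, $\mu_\varphi(a)$ denotes the frequency of the letter $a$ (under the unique invariant probability measure of the associated substitution subshift); equivalently, $(\mu_\varphi(a))_{a\in A}$ is the positive Perron–Frobenius eigenvector, normalized to have sum $1$, of the incidence matrix $M$ with $M_{a,b}$ = number of occurrences of $a$ in $\varphi(b)$. A homomorphism ${\rm S}:\mathcal{L}_\varphi\to\mathbb{Z}\times\mathbb{Z}$ is a map with ${\rm S}(w_1\cdots w_n)={\rm S}(w_1)+\cdots+{\rm S}(w_n)$, determined by the vectors ${\rm S}(a)$, $a\in A$. *)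

From mathcomp Require Import all_boot all_order all_algebra.
From mathcomp Require Import all_classical all_reals.
Set Implicit Arguments. Unset Strict Implicit. Unset Printing Implicit Defensive.
Import Order.TTheory GRing.Theory Num.Theory.
Local Open Scope ring_scope.

Definition morph_word (A : finType) (phi : A -> seq A) (w : seq A) : seq A :=
  flatten (map phi w).

Definition morph_iter (A : finType) (phi : A -> seq A) (n : nat) (w : seq A) : seq A :=
  iter n (morph_word phi) w.

Definition primitive (A : finType) (phi : A -> seq A) : Prop :=
  exists k : nat, (0 < k)%N /\ forall a b : A, b \in morph_iter phi k [:: a].

Definition in_language (A : finType) (phi : A -> seq A) (w : seq A) : Prop :=
  w != [::] /\ exists (n : nat) (a : A), infix w (morph_iter phi n [:: a]).

Definition incidence (A : finType) (phi : A -> seq A) (a b : A) : nat :=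
  count_mem a (phi b).

(* mu is the letter-frequency vector: the positive Perron-Frobenius eigenvector
   of the incidence matrix, normalized to sum 1.  (For a primitive matrix the
   positive eigenvector is unique up to scaling, so this characterizes mu.) *)
Definition letter_frequency (R : realType) (A : finType) (phi : A -> seq A)
    (mu : A -> R) : Prop :=
  [/\ forall a, 0 < mu a,
      \sum_(a : A) mu a = 1 &
      exists lambda : R, forall a : A,
        \sum_(b : A) (incidence phi a b)%:R * mu b = lambda * mu a].

Definition hom_word (A : finType) (S : A -> int * int) (w : seq A) : int * int :=
  ((\sum_(x <- w) (S x).1)%R, (\sum_(x <- w) (S x).2)%R).

Definition drift (R : realType) (A : finType) (mu : A -> R) (S : A -> int * int)
    : R * R :=
  (\sum_(a : A) mu a * ((S a).1)%:~R, \sum_(a : A) mu a * ((S a).2)%:~R).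

Definition hom_image (A : finType) (phi : A -> seq A) (S : A -> int * int)
    (v : int * int) : Prop :=
  exists w : seq A, in_language phi w /\ hom_word S w = v.

Definition finite_subset (X : int * int -> Prop) : Prop :=
  exists s : seq (int * int), forall v, X v -> v \in s.

From mathcomp Require Import all_boot all_order all_algebra.
From mathcomp Require Import all_classical all_reals.
From mathcomp Require Import ring lra.
Import Order.TTheory GRing.Theory Num.Theory.
Set Implicit Arguments. Unset Strict Implicit. Unset Printing Implicit Defensive.
Local Open Scope ring_scope.

(* Pair the drift d with S: g(a) = <d, S(a)> satisfies sum_a mu(a) g(a) = |d|^2 > 0.
   Some power P = M^p of the incidence matrix is positive, and mu is a positive
   eigenvector of P with eigenvalue L; so W(a,c) = P(a,c) mu(c) / (L mu(a)) is a
   stochastic matrix with entries bounded below, and by Doeblin contraction every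
   column of P^j, divided by L^j mu, becomes nearly constant.  Hence for a large K
   every block phi^K(c) has positive g-sum.  A word of the language is short or a
   factor of a concatenation of such blocks, so its g-sum is bounded below by some
   -C: S(L_phi) lies in the half-plane <d, v> >= -C, whose complement is infinite. *)

Lemma sumr_seq_count_mem (V : nmodType) (A : finType) (F : A -> V) (u : seq A) :
  \sum_(c <- u) F c = \sum_c F c *+ count_mem c u.
Proof.
elim: u => [|x u IH]; first by rewrite big_nil big1.
rewrite big_cons IH (bigD1 x) //= [in RHS](bigD1 x) //= eqxx mulrS addrA.
congr (_ + _); apply: eq_bigr => c /negbTE nxc.
by rewrite eq_sym nxc.
Qed.

Lemma ler_sum_term (R : numDomainType) (I : finType) (F : I -> R) (i : I) :
  (forall j, 0 <= F j) -> F i <= \sum_j F j.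
Proof. by move=> F_ge0; rewrite (bigD1 i) //= lerDl sumr_ge0. Qed.

Section Morphism.
Variables (A : finType) (phi : A -> seq A).

Lemma morph_iter_nil k : morph_iter phi k [::] = [::].
Proof. by elim: k => //= k; rewrite /morph_iter /= => ->. Qed.

Lemma morph_iter_cat k u v :
  morph_iter phi k (u ++ v) = morph_iter phi k u ++ morph_iter phi k v.
Proof.
by elim: k => //= k; rewrite /morph_iter /= => ->; rewrite /morph_word map_cat flatten_cat.
Qed.

Lemma morph_iter_flatten k u :
  morph_iter phi k u = flatten [seq morph_iter phi k [:: c] | c <- u].
Proof. by elim: u => [|c u IH]; rewrite ?morph_iter_nil // -cat1s morph_iter_cat IH. Qed.

Lemma morph_iterD m n u :
  morph_iter phi (m + n) u = morph_iter phi m (morph_iter phi n u).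
Proof. exact: iterD. Qed.

Definition iter_incidence k (a b : A) : nat := count_mem a (morph_iter phi k [:: b]).

Lemma iter_incidence1 a b : iter_incidence 1 a b = incidence phi a b.
Proof. by rewrite /iter_incidence /morph_iter /= /morph_word /= cats0. Qed.

Lemma sum_morph_iter (V : nmodType) (g : A -> V) k c :
  \sum_(x <- morph_iter phi k [:: c]) g x = \sum_a g a *+ iter_incidence k a c.
Proof. exact: sumr_seq_count_mem. Qed.

Lemma iter_incidenceD (R : pzSemiRingType) k j a b :
  (iter_incidence (k + j) a b)%:R =
  \sum_c (iter_incidence j c b)%:R * (iter_incidence k a c)%:R :> R.
Proof.
rewrite /iter_incidence morph_iterD [in LHS]morph_iter_flatten count_flatten.
rewrite sumnE !big_map natr_sum [LHS]sumr_seq_count_mem.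
by apply: eq_bigr => c _; rewrite mulr_natl.
Qed.

Lemma iter_incidence_eigen (R : comPzRingType) (mu : A -> R) lambda :
  (forall a, \sum_b (incidence phi a b)%:R * mu b = lambda * mu a) ->
  forall k a, \sum_b (iter_incidence k a b)%:R * mu b = lambda ^+ k * mu a.
Proof.
move=> mu_eigen; elim=> [|k IH] a.
  rewrite expr0 mul1r (bigD1 a) //= big1 => [|b /negbTE nba].
    by rewrite /iter_incidence /= eqxx mul1r addr0.
  by rewrite /iter_incidence /= nba mul0r.
under eq_bigr do rewrite -addn1 iter_incidenceD mulr_suml.
rewrite exchange_big /= exprSr mulrAC -IH mulr_suml; apply: eq_bigr => c _.
rewrite -mulrA [mu c * _]mulrC -mu_eigen mulr_sumr; apply: eq_bigr => b _.
by rewrite iter_incidence1; ring.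
Qed.

End Morphism.

Section StochasticContraction.
Variables (R : realDomainType) (A : finType) (W : A -> A -> R) (d : R).
Hypotheses (W_ge : forall a c, d <= W a c) (W_row_sum : forall a, \sum_c W a c = 1)
  (d_ge0 : 0 <= d).

Lemma stochastic_contract (t : A -> R) m M c0 :
  (forall c, m <= t c <= M) ->
  forall a, m + d * (t c0 - m) <= \sum_c W a c * t c <= M - d * (M - t c0).
Proof.
move=> t_bnd a; have W_ge0 c : 0 <= W a c by apply: le_trans (W_ge a c).
have weighted_gap (f : A -> R) : (forall c, 0 <= f c) ->
    d * f c0 <= \sum_c W a c * f c.
  move=> f_ge0; apply: le_trans (ler_sum_term c0 (fun c => mulr_ge0 (W_ge0 c) (f_ge0 c))).
  exact: ler_wpM2r (W_ge a c0).
have [lo_ge0 hi_ge0] : (forall c, 0 <= t c - m) /\ (forall c, 0 <= M - t c).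
  by split=> c; have /andP[] := t_bnd c; rewrite subr_ge0.
have lo := weighted_gap _ lo_ge0; have hi := weighted_gap _ hi_ge0.
have sumWB (f h : A -> R) :
    \sum_c W a c * (f c - h c) = \sum_c W a c * f c - \sum_c W a c * h c.
  by rewrite -sumrB; apply: eq_bigr => c _; rewrite mulrBr.
rewrite !sumWB -!mulr_suml W_row_sum !mul1r in lo hi.
by apply/andP; split; lra.
Qed.

Lemma stochastic_iter_contract (t : nat -> A -> R) m M :
  (forall i a, t i.+1 a = \sum_c W a c * t i c) -> (forall a, m <= t 0%N a <= M) ->
  forall j, exists2 m', m <= m' & forall a, m' <= t j a <= m' + (1 - d) ^+ j * (M - m).
Proof.
move=> t_rec t0_bnd; elim=> [|j [m' m_le tj_bnd]].
  by exists m => // a; rewrite expr0 mul1r addrC subrK.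
case: (pickP (fun _ : A => true)) => [c0 _|A0]; last by exists m' => // a; have := A0 a.
exists (m' + d * (t j c0 - m')).
  have /andP[tc0_ge _] := tj_bnd c0.
  by rewrite (le_trans m_le) // lerDl mulr_ge0 // subr_ge0.
move=> a; rewrite t_rec.
have /andP[lo hi] := stochastic_contract c0 tj_bnd a.
by apply/andP; split; [|apply: le_trans hi _; rewrite exprS]; lra.
Qed.

End StochasticContraction.

Lemma weighted_sum_ge (R : realDomainType) (I : finType) (c t : I -> R) (m delta : R) :
  (forall i, m <= t i <= m + delta) ->
  m * \sum_i c i - delta * \sum_i `|c i| <= \sum_i c i * t i.
Proof.
move=> t_bnd; rewrite !mulr_sumr -sumrB; apply: ler_sum => i _.
have /andP[lo hi] := t_bnd i; have c_ge := lerNnormlW (lexx `|c i|).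
have := normr_ge0 (c i); nra.
Qed.

Lemma bernoulli_le1 (R : realDomainType) (d : R) (n : nat) :
  0 <= d -> d <= 1 -> (1 - d) ^+ n * (1 + n%:R * d) <= 1.
Proof.
move=> d_ge0 d_le1; elim: n => [|n IH]; first by rewrite expr0 mul0r addr0 mul1r.
have pow_ge0 : 0 <= (1 - d) ^+ n by rewrite exprn_ge0 // subr_ge0.
apply: le_trans IH; rewrite exprSr -natr1 -mulrA ler_wpM2l //.
have := ler0n R n; nra.
Qed.

Lemma geometric_decay (R : archiRealFieldType) (d K e : R) :
  0 < d -> d <= 1 -> 0 < e -> exists n : nat, (1 - d) ^+ n * K < e.
Proof.
move=> d_gt0 d_le1 e_gt0; have [K_le0|K_gt0] := lerP K 0.
  by exists 0%N; rewrite expr0 mul1r (le_lt_trans K_le0).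
have Kde_ge0 : 0 <= K / (d * e) by rewrite ltW // divr_gt0 // mulr_gt0.
exists (Num.bound (K / (d * e))).
have := archi_boundP Kde_ge0; rewrite ltr_pdivrMr ?mulr_gt0 //.
set n := Num.bound _; move=> K_lt.
have nd_ge0 : 0 <= n%:R * d by rewrite mulr_ge0 // ltW.
have bernK := ler_wpM2r (ltW K_gt0) (bernoulli_le1 n (ltW d_gt0) d_le1).
rewrite -(ltr_pM2r (_ : 0 < 1 + n%:R * d)) ?ltr_wpDr //.
apply: le_lt_trans (_ : K < _); first by rewrite mulrAC mul1r in bernK.
by rewrite mulrDr mulr1 mulrC -mulrA ltr_wpDl // ltW.
Qed.

Section PositiveMatrix.
Variables (R : archiRealFieldType) (A : finType) (P : A -> A -> R) (mu : A -> R) (L : R).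
Hypotheses (P_ge1 : forall a c, 1 <= P a c) (mu_gt0 : forall a, 0 < mu a)
  (mu_le1 : forall a, mu a <= 1) (mu_eigen : forall a, \sum_c P a c * mu c = L * mu a).

Lemma eigen_mu_gt0 a : 0 < L * mu a.
Proof.
have P_gt0 b c : 0 < P b c by apply: lt_le_trans (P_ge1 b c).
rewrite -mu_eigen; apply: lt_le_trans (ler_sum_term a _); first exact: mulr_gt0.
by move=> c; rewrite mulr_ge0 ?ltW.
Qed.

Lemma eigenvalue_gt0 (a : A) : 0 < L.
Proof. by have := eigen_mu_gt0 a; rewrite pmulr_lgt0. Qed.

Let W a c := P a c * mu c / (L * mu a).

Lemma normalized_row_sum a : \sum_c W a c = 1.
Proof. by rewrite -mulr_suml mu_eigen divff // gt_eqF // eigen_mu_gt0. Qed.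

Lemma normalized_ge a c : mu c / L <= W a c.
Proof.
have L_gt0 := eigenvalue_gt0 a.
have -> : W a c = P a c / mu a * (mu c / L) by rewrite /W; field; rewrite !gt_eqF.
apply: ler_peMl; first by rewrite divr_ge0 // ltW.
by rewrite ler_pdivlMr // mul1r (le_trans (mu_le1 a)).
Qed.

Lemma normalized_iter (x : nat -> A -> R) :
    (forall i a, x i.+1 a = \sum_c P a c * x i c) ->
  forall i a, x i.+1 a / (L ^+ i.+1 * mu a) = \sum_c W a c * (x i c / (L ^+ i * mu c)).
Proof.
move=> x_rec i a; have L_gt0 := eigenvalue_gt0 a.
rewrite x_rec mulr_suml; apply: eq_bigr => c _; rewrite /W exprS.
by field; rewrite !gt_eqF ?exprn_gt0.
Qed.

Variable g : A -> R.
Hypothesis g_mu_gt0 : 0 < \sum_a g a * mu a.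

Lemma iterates_weighted_sum_gt0 (U : R) : exists j, forall x : nat -> A -> R,
  (forall i a, x i.+1 a = \sum_c P a c * x i c) -> (forall a, 1 <= x 0%N a <= U) ->
  0 < \sum_a g a * x j a.
Proof.
have [a0 _] : exists a0 : A, true.
  case: (pickP (fun _ : A => true)) => [a0|A0]; first by exists a0.
  by move: g_mu_gt0; rewrite big_pred0 ?ltxx.
have L_gt0 := eigenvalue_gt0 a0.
have [cm _ mu_ge] := @arg_minP _ _ A a0 xpredT mu isT; pose d := mu cm / L.
have W_ge a c : d <= W a c.
  by apply: le_trans (normalized_ge a c); rewrite ler_pM2r ?invr_gt0 ?mu_ge.
have d_gt0 : 0 < d by rewrite divr_gt0.
have d_le1 : d <= 1.
  rewrite -(normalized_row_sum a0); apply: le_trans (W_ge a0 a0) (ler_sum_term _ _).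
  by move=> c; apply: le_trans (W_ge a0 c); apply: ltW.
pose E := \sum_a `|g a * mu a|.
have [j decay] := geometric_decay ((U / mu cm - 1) * E) d_gt0 d_le1 g_mu_gt0.
exists j => x x_rec x0_bnd.
pose t i a := x i a / (L ^+ i * mu a).
have t0_bnd a : 1 <= t 0%N a <= U / mu cm.
  have /andP[x0_ge1 x0_le] := x0_bnd a; have U_ge1 := le_trans x0_ge1 x0_le.
  have mua := mu_gt0 a.
  rewrite /t expr0 mul1r ler_pdivlMr // mul1r ler_pdivrMr //.
  rewrite (le_trans (mu_le1 a)) //=; apply: le_trans x0_le _; rewrite -mulrA.
  apply: ler_peMr; first exact: le_trans ler01 U_ge1.
  by rewrite mulrC ler_pdivlMr // mul1r mu_ge.
have [m m_ge1 tj_bnd] := stochastic_iter_contract W_ge normalized_row_sum (ltW d_gt0)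
  (normalized_iter x_rec) t0_bnd j.
have := weighted_sum_ge (fun a => g a * mu a) tj_bnd.
have -> : \sum_a g a * x j a = L ^+ j * \sum_a g a * mu a * t j a.
  rewrite mulr_sumr; apply: eq_bigr => a _; rewrite /t.
  by field; rewrite !gt_eqF ?exprn_gt0.
move=> lower; rewrite pmulr_rgt0 ?exprn_gt0 //; apply: lt_le_trans lower.
rewrite -/E mulrAC -mulrA [E * _]mulrC subr_gt0 (lt_le_trans decay) //.
exact: ler_peMl (ltW g_mu_gt0) m_ge1.
Qed.

End PositiveMatrix.

Section BlockSums.
Variables (R : realDomainType) (A : eqType) (g : A -> R) (gm : R).
Hypotheses (gm_ge0 : 0 <= gm) (g_ge : forall x, - gm <= g x).

Lemma sum_ge_size (w : seq A) (n : nat) :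
  (size w <= n)%N -> - (n%:R * gm) <= \sum_(x <- w) g x.
Proof.
elim: w n => [|x w IH] [|n] //=; rewrite ?big_nil ?oppr_le0 ?mulr_ge0 // => w_le.
by rewrite big_cons -natr1 mulrDl mul1r opprD addrC lerD ?IH.
Qed.

Variables (psi : A -> seq A) (L : nat).
Hypotheses (psi_size : forall c, (size (psi c) <= L)%N)
  (psi_sum_ge0 : forall c, 0 <= \sum_(x <- psi c) g x).

Lemma sum_take_flatten_ge u m :
  - (L%:R * gm) <= \sum_(x <- take m (flatten (map psi u))) g x.
Proof.
elim: u m => [|c u IH] m /=; first by rewrite big_nil oppr_le0 mulr_ge0.
rewrite take_cat; case: ifP => _.
  by apply: sum_ge_size; rewrite size_take_min geq_min psi_size orbT.
by rewrite big_cat /= -[X in X <= _]add0r lerD ?IH.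
Qed.

Lemma sum_take_drop_flatten_ge u i m :
  - (L.*2%:R * gm) <= \sum_(x <- take m (drop i (flatten (map psi u)))) g x.
Proof.
have twice : L.*2%:R * gm = L%:R * gm + L%:R * gm :> R by rewrite -addnn natrD mulrDl.
elim: u i => [|c u IH] i /=; first by rewrite big_nil oppr_le0 mulr_ge0.
rewrite drop_cat; case: ifP => _; last exact: IH.
have drop_le : (size (drop i (psi c)) <= L)%N by rewrite size_drop (leq_trans (leq_subr _ _)).
rewrite take_cat twice opprD; case: ifP => _.
  have take_le : (size (take m (drop i (psi c))) <= L)%N.
    by rewrite size_take_min geq_min drop_le orbT.
  by have := sum_ge_size take_le; have := mulr_ge0 (ler0n R L) gm_ge0; lra.
by rewrite big_cat lerD ?(sum_ge_size drop_le) ?sum_take_flatten_ge.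
Qed.

Lemma sum_infix_flatten_ge u w : infix w (flatten (map psi u)) ->
  - (L.*2%:R * gm) <= \sum_(x <- w) g x.
Proof.
case/infixP=> s1 [s2 flat_eq]; have := sum_take_drop_flatten_ge u (size s1) (size w).
by rewrite flat_eq drop_size_cat // take_size_cat.
Qed.

End BlockSums.

Lemma language_sums_bounded_below (R : realDomainType) (A : finType) (phi : A -> seq A)
    (g : A -> R) (K : nat) :
  (forall c, 0 <= \sum_(x <- morph_iter phi K [:: c]) g x) ->
  exists C, forall w, in_language phi w -> - C <= \sum_(x <- w) g x.
Proof.
move=> block_ge0; pose gm := \sum_a `|g a|.
have gm_ge0 : 0 <= gm by apply: sumr_ge0.
have g_ge x : - gm <= g x := lerNnormlW (ler_sum_term x (fun a => normr_ge0 (g a))).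
pose L := \max_c size (morph_iter phi K [:: c]).
pose B := \max_(i < K) \max_c size (morph_iter phi i [:: c]).
exists ((L.*2 + B)%:R * gm) => w [_ [n [a w_infix]]].
have [K_le_n|n_lt_K] := leqP K n.
  have : infix w (flatten [seq morph_iter phi K [:: c] | c <- morph_iter phi (n - K) [:: a]]).
    by rewrite -morph_iter_flatten -morph_iterD subnKC.
  move/(sum_infix_flatten_ge gm_ge0 g_ge (fun c => leq_bigmax c) block_ge0).
  by apply: le_trans; rewrite lerN2 ler_wpM2r // ler_nat leq_addr.
apply: sum_ge_size => //; apply: leq_trans (leq_addl _ _).
apply: leq_trans (size_infix w_infix) _.
apply: leq_trans (@leq_bigmax _ (fun c => size (morph_iter phi n [:: c])) a) _.
exact: (@leq_bigmax _ (fun i : 'I_K => \max_c size (morph_iter phi i [:: c])) (Ordinal n_lt_K)).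
Qed.

Lemma primitive_block_sums_gt0 (R : realType) (A : finType) (phi : A -> seq A)
    (mu g : A -> R) :
  primitive phi -> letter_frequency phi mu -> 0 < \sum_a g a * mu a ->
  exists K, forall c, 0 < \sum_(x <- morph_iter phi K [:: c]) g x.
Proof.
move=> [p [_ prim]] [mu_gt0 mu_sum [lambda mu_eigen]] g_mu_gt0.
pose P a b : R := (iter_incidence phi p a b)%:R.
have P_ge1 a b : 1 <= P a b by rewrite ler1n -has_count has_pred1 prim.
have mu_le1 a : mu a <= 1 by rewrite -mu_sum ler_sum_term // => b; apply: ltW.
have [j pos] := iterates_weighted_sum_gt0 P_ge1 mu_gt0 mu_le1
  (iter_incidence_eigen mu_eigen p) g_mu_gt0 (\sum_a \sum_b P a b).
exists (j.+1 * p)%N => c; rewrite sum_morph_iter.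
under eq_bigr do rewrite -mulr_natr.
apply: (pos (fun i a => (iter_incidence phi (i.+1 * p) a c)%:R)) => [i a|a].
  by rewrite mulSn iter_incidenceD; apply: eq_bigr => b _; rewrite mulrC.
rewrite mul1n P_ge1 /=; apply: le_trans (ler_sum_term a _) => [|a'].
  by apply: ler_sum_term c _ => b; apply: ler0n.
by apply: sumr_ge0 => b _; apply: ler0n.
Qed.

Definition dotz (R : pzRingType) (d : R * R) (v : int * int) : R :=
  d.1 * v.1%:~R + d.2 * v.2%:~R.

Lemma dotz_hom_word (R : pzRingType) (A : finType) (d : R * R) (S : A -> int * int) w :
  dotz d (hom_word S w) = \sum_(x <- w) dotz d (S x).
Proof. by rewrite /dotz /hom_word /= !rmorph_sum !mulr_sumr -big_split. Qed.

Lemma sum_sqr_gt0 (R : realDomainType) (x y : R) : (x, y) != (0, 0) -> 0 < x ^+ 2 + y ^+ 2.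
Proof.
have sqr_gt0 (z : R) : z != 0 -> 0 < z ^+ 2.
  by move=> z_neq0; rewrite exprn_even_gt0 // z_neq0 orbT.
rewrite xpair_eqE negb_and => /orP[] /sqr_gt0 z_gt0.
  by rewrite ltr_pwDl ?sqr_ge0.
by rewrite ltr_pwDr ?sqr_ge0.
Qed.

Lemma drift_pairing_gt0 (R : realType) (A : finType) (mu : A -> R) (S : A -> int * int) :
  drift mu S != (0, 0) -> 0 < \sum_a dotz (drift mu S) (S a) * mu a.
Proof.
have pairing d : \sum_a dotz d (S a) * mu a = d.1 * (drift mu S).1 + d.2 * (drift mu S).2.
  rewrite /drift /= !mulr_sumr -big_split; apply: eq_bigr => a _ /=; rewrite /dotz; ring.
by rewrite pairing; case: (drift mu S) => x y; rewrite /= -!expr2; apply: sum_sqr_gt0.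
Qed.

Lemma halfplane_not_finite (R : archiRealFieldType) (d : R * R) (B : R) :
  d != (0, 0) -> ~ finite_subset (fun v => dotz d v < B).
Proof.
case: d => d1 d2 d_neq0 [s halfplane_sub].
pose N : R := `|d1| + `|d2|.
have N_gt0 : 0 < N.
  move: d_neq0; rewrite xpair_eqE negb_and -!normr_gt0 => /orP[] d_gt0.
    by rewrite ltr_pwDl.
  by rewrite ltr_pwDr.
pose T : R := \sum_(u <- s) `|dotz (d1, d2) u|.
have T_ge0 : 0 <= T by apply: sumr_ge0.
pose n := Num.bound ((T + `|B|) / N).
have n_big : T + `|B| < n%:R * N.
  rewrite -ltr_pdivrMr //; apply: archi_boundP.
  exact: divr_ge0 (addr_ge0 T_ge0 (normr_ge0 B)) (ltW N_gt0).
pose v : int * int := (- (sgz d1 * n), - (sgz d2 * n)).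
have v_val : dotz (d1, d2) v = - (n%:R * N).
  rewrite /dotz /= !mulrNz !intrM -!sgrEz -!pmulrn !mulrN !mulrA.
  by rewrite [d1 * _]mulrC [d2 * _]mulrC -!normrEsg /N; ring.
have v_in : v \in s.
  apply: halfplane_sub; rewrite v_val; apply: lt_le_trans (lerNnormlW (lexx `|B|)).
  by rewrite ltrN2 (le_lt_trans _ n_big) // lerDr.
have : `|dotz (d1, d2) v| <= T.
  by rewrite /T (perm_big _ (perm_to_rem v_in)) big_cons lerDl sumr_ge0.
by move/lerNnormlW; rewrite v_val; have := normr_ge0 B; lra.
Qed.

Unset Implicit Arguments.
Theorem proposition10 (R : realType) (A : finType) (phi : A -> seq A)
    (S : A -> int * int) (mu : A -> R) :
  primitive phi ->
  letter_frequency phi mu ->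
  drift mu S != (0, 0) ->
  ~ finite_subset (fun v => ~ hom_image phi S v).
Proof.
move=> prim freq drift_neq0 [s compl_sub].
have [K block_gt0] := primitive_block_sums_gt0 prim freq (drift_pairing_gt0 drift_neq0).
have [C lang_ge] := language_sums_bounded_below (fun c => ltW (block_gt0 c)).
apply: (halfplane_not_finite (B := - C) drift_neq0); exists s => v v_lt.
apply: compl_sub => -[w [w_lang w_val]].
by move: v_lt; rewrite -w_val dotz_hom_word ltNge lang_ge.
Qed.
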